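(* There is an adjunction $M \dashv \mathrm{Idem}$ between the category $\mathrm{DLatt}_{lb}$ of lower bounded distributive lattices and the category $\mathrm{CAlg}^{nu}$ of non-unital commutative rings, where the left adjoint sends $D$ to its module of motives $M(D)$ with multiplication $[U]\cdot[V]=[U\wedge V]$, and the right adjoint sends a non-unital commutative ring $R$ to its set of idempotents $\mathrm{Idem}(R)=\{p\in R \mid p^2=p\}$ viewed as a lower bounded distributive lattice with bottom $0$, $p\wedge q = pq$ and $p\vee q = p+q-pq$.
   Context: A lower bounded distributive lattice is a distributive lattice with a bottom element $0$; morphisms in $\mathrm{DLatt}_{lb}$ are lattice homomorphisms preserving $0$. The module of motives $M(D)$ is the free abelian group $\mathbb{Z}[D]$ modulo the relations $[0]=0$ and $[U]+[V]=[U\vee V]+[U\wedge V]$ for all $U,V\in D$. *)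

From HB Require Import structures.
From mathcomp Require Import all_boot all_order all_algebra.
From mathcomp Require Import ring_quotient.
From mathcomp Require Import freeg.
From Stdlib Require Import ClassicalEpsilon.

Set Implicit Arguments.
Unset Strict Implicit.
Unset Printing Implicit Defensive.

Import Order.TTheory GRing.Theory Num.Theory.
Local Open Scope ring_scope.
Local Open Scope quotient_scope.

Definition is_nuCRing (A : zmodType) (mul : A -> A -> A) : Prop :=
  [/\ associative mul, commutative mul & left_distributive mul +%R].

Definition nu_ring_hom (A B : zmodType) (mulA : A -> A -> A)
  (mulB : B -> B -> B) (g : A -> B) : Prop :=
  (forall x y, g (x + y) = g x + g y) /\ (forall x y, g (mulA x y) = mulB (g x) (g y)).

Section Idem.
Variables (R : zmodType) (mul : R -> R -> R).
Definition idem (p : R) : Prop := mul p p = p.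
Definition idem_meet (p q : R) : R := mul p q.
Definition idem_join (p q : R) : R := p + q - mul p q.
Definition idem_bot : R := 0.

Definition Idem_is_lbdlattice : Prop :=
  idem idem_bot /\
  (forall p q, idem p -> idem q -> idem (idem_meet p q)) /\
  (forall p q, idem p -> idem q -> idem (idem_join p q)) /\
  (forall p q, idem p -> idem q ->
     idem_meet p q = idem_meet q p /\ idem_join p q = idem_join q p) /\
  (forall p q r, idem p -> idem q -> idem r ->
     idem_meet p (idem_meet q r) = idem_meet (idem_meet p q) r /\
     idem_join p (idem_join q r) = idem_join (idem_join p q) r) /\
  (forall p q, idem p -> idem q ->
     idem_meet p (idem_join p q) = p /\ idem_join p (idem_meet p q) = p) /\
  (forall p q r, idem p -> idem q -> idem r ->
     idem_meet p (idem_join q r) = idem_join (idem_meet p q) (idem_meet p r)) /\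
  (forall p, idem p -> idem_join idem_bot p = p).
End Idem.

Definition lb_hom_to_Idem (d : Order.disp_t) (D : bDistrLatticeType d)
  (R : zmodType) (mul : R -> R -> R) (f : D -> R) : Prop :=
  [/\ (forall U, idem mul (f U)),
      (forall U V, f (Order.meet U V) = idem_meet mul (f U) (f V)),
      (forall U V, f (Order.join U V) = idem_join mul (f U) (f V)) &
      f Order.bottom = idem_bot R].

(* The module of motives M(D) = Z[D] / <[0], [U]+[V]-[U v V]-[U ^ V]>. *)
Section Motives.
Variables (d : Order.disp_t) (D : bDistrLatticeType d).

Definition ZD := {freeg D / int}.

Inductive motive_rel : ZD -> Prop :=
| mrel_bot : motive_rel << (Order.bottom : D) >>
| mrel_mv (U V : D) :
    motive_rel (<< U >> + << V >> - << Order.join U V >> - << Order.meet U V >>)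
| mrel_zero : motive_rel 0
| mrel_sub x y : motive_rel x -> motive_rel y -> motive_rel (x - y).

Definition motive_relb (x : ZD) : bool :=
  if excluded_middle_informative (motive_rel x) then true else false.

Lemma motive_relbP x : reflect (motive_rel x) (motive_relb x).
Proof.
rewrite /motive_relb; case: excluded_middle_informative => H.
- by constructor.
- by constructor.
Qed.

Lemma motive_rel_zmod_closed : zmod_closed motive_relb.
Proof.
split; first by apply/motive_relbP; exact: mrel_zero.
by move=> x y /motive_relbP Hx /motive_relbP Hy; apply/motive_relbP; exact: mrel_sub.
Qed.

Definition N_D_pred : {pred ZD} := fun x => motive_relb x.

HB.instance Definition _ := GRing.isZmodClosed.Build ZD N_D_pred
  motive_rel_zmod_closed.

Definition N_D : zmodClosed ZD := N_D_pred.

Definition M := @Quotient.quot ZD N_D.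
HB.instance Definition _ := GRing.Zmodule.on M.
Definition motive (U : D) : M := \pi_M << U >>.
End Motives.

(* Idempotents of a non-unital commutative ring are closed under pq and
   p + q - pq, and the lattice laws for these operations are identities that
   use p^2 = p only for absorption and distributivity.  The meet of D extends
   bilinearly to an associative commutative product on Z[D]; since meet
   distributes over join, the defining relations of M(D) form an ideal, so the
   product descends to M(D), where [U v V] = [U] + [V] - [U][V] makes
   U |-> [U] a lattice map into the idempotents.  A lattice map
   f : D -> Idem(R) extends linearly to Z[D] and kills the relations because
   joins in Idem(R) are p + q - pq, hence factors through M(D); this is
   multiplicative because f preserves meets, and unique because the [U]
   generate M(D). *)

From HB Require Import structures.
From mathcomp Require Import all_boot all_order all_algebra.
From mathcomp Require Import ring_quotient freeg.
From Stdlib Require Import FunctionalExtensionality.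

Set Implicit Arguments.
Unset Strict Implicit.
Unset Printing Implicit Defensive.

Import Order.LTheory GRing.Theory.
Local Open Scope ring_scope.
Local Open Scope quotient_scope.

Section FreeAbelianGroup.
Variable K : choiceType.
Implicit Types (x y : {freeg K / int}) (U : K).

HB.instance Definition _ (M : lmodType int) (f : K -> M) :=
  GRing.isZmodMorphism.Build _ _ (fglift f) (lift_is_additive f).

Lemma fgliftU (M : lmodType int) (f : K -> M) U : fglift f << U >> = f U.
Proof. by rewrite liftU scale1r. Qed.

Lemma freeg_ind (P : {freeg K / int} -> Prop) :
    P 0 -> (forall x y, P x -> P y -> P (x - y)) -> (forall U, P << U >>) ->
  forall x, P x.
Proof.
move=> P0 PB PU x.
have PN y : P y -> P (- y) by move=> Py; rewrite -sub0r; apply: PB.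
have PD y z : P y -> P z -> P (y + z).
  by move=> Py Pz; rewrite -[z]opprK; apply: PB Py (PN _ Pz).
have PZ y (k : int) : P y -> P (y *~ k).
  have PMn m : P y -> P (y *+ m) by elim: m => [|m IH] Py; rewrite ?mulrS; auto.
  by case: k => n Py; rewrite ?NegzE ?mulrNz -pmulrn; auto.
rewrite -(freeg_sumE x); elim: (dom x) => [|U s IH]; rewrite ?big_nil ?big_cons //.
by apply: PD IH; rewrite -[coeff U x]intz -freegU_mulz; exact: PZ (PU U).
Qed.

Lemma freeg_morph_ext (V : zmodType) (F G : {freeg K / int} -> V) :
    zmod_morphism F -> zmod_morphism G -> (forall U, F << U >> = G << U >>) ->
  F =1 G.
Proof.
move=> FB GB FGU; elim/freeg_ind => [|x y Fx Fy|//]; last by rewrite FB GB Fx Fy.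
by have := FB 0 0; have := GB 0 0; rewrite !subrr => -> ->.
Qed.

End FreeAbelianGroup.

Section NonUnitalRing.
Variables (R : zmodType) (mul : R -> R -> R).
Hypothesis mul_nuCRing : is_nuCRing mul.
Local Notation "x * y" := (mul x y) : ring_scope.

Lemma nu_mulA : associative mul. Proof. by case: mul_nuCRing. Qed.
Lemma nu_mulC : commutative mul. Proof. by case: mul_nuCRing. Qed.
Lemma nu_mulDl : left_distributive mul +%R. Proof. by case: mul_nuCRing. Qed.

Lemma nu_mulBl c : zmod_morphism (mul^~ c).
Proof. by move=> a b; apply: (addIr (b * c)); rewrite -nu_mulDl !subrK. Qed.

Lemma nu_mulBr c : zmod_morphism (mul c).
Proof. by move=> a b; rewrite !(nu_mulC c) nu_mulBl. Qed.

Lemma nu_mulDr : right_distributive mul +%R.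
Proof. by move=> a b c; rewrite !(nu_mulC a) nu_mulDl. Qed.

Lemma nu_mul0l a : 0 * a = 0.
Proof. by have := nu_mulBl a 0 0; rewrite !subrr. Qed.

Lemma nu_mulACA : interchange mul mul.
Proof.
by move=> a b c e; rewrite -!nu_mulA; congr (a * _); rewrite !nu_mulA (nu_mulC b).
Qed.

Implicit Types p q r : R.
Local Notation meet := (idem_meet mul).
Local Notation join := (idem_join mul).

Lemma idem_meet_closed p q : idem mul p -> idem mul q -> idem mul (meet p q).
Proof. by rewrite /idem /idem_meet nu_mulACA => idp idq; rewrite idp idq. Qed.

Lemma idem_meetC p q : meet p q = meet q p.
Proof. exact: nu_mulC. Qed.

Lemma idem_joinC p q : join p q = join q p.
Proof. by rewrite /idem_join [p + q]addrC (nu_mulC p). Qed.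

Lemma idem_meetA p q r : meet p (meet q r) = meet (meet p q) r.
Proof. exact: nu_mulA. Qed.

Lemma idem_meetUr p q r : idem mul p ->
  meet p (join q r) = join (meet p q) (meet p r).
Proof.
by rewrite /idem /idem_meet /idem_join => idp; rewrite nu_mulBr !nu_mulDr nu_mulACA idp.
Qed.

Lemma idem_meetKU p q : idem mul p -> meet p (join p q) = p.
Proof.
by move=> idp; rewrite idem_meetUr // [meet p p]idp /idem_join /idem_meet nu_mulA idp addrK.
Qed.

Lemma idem_joinKI p q : idem mul p -> join p (meet p q) = p.
Proof. by rewrite /idem /idem_join /idem_meet => idp; rewrite nu_mulA idp addrK. Qed.

Lemma idem_join_closed p q : idem mul p -> idem mul q -> idem mul (join p q).
Proof.
move=> idp idq.
have pJ : p * join p q = p by exact: idem_meetKU.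
have qJ : q * join p q = q by rewrite idem_joinC; exact: idem_meetKU.
by rewrite /idem {1}/idem_join nu_mulBl nu_mulDl pJ qJ -nu_mulA qJ.
Qed.

Lemma idem_joinA p q r : join p (join q r) = join (join p q) r.
Proof.
rewrite /idem_join nu_mulBr !nu_mulDr nu_mulBl !nu_mulDl nu_mulA !opprB !opprD !addrA.
by rewrite !(addrAC _ (- (q * r))) !(addrAC _ (- (p * q))).
Qed.

Lemma idem_join0x p : join 0 p = p.
Proof. by rewrite /idem_join nu_mul0l add0r subr0. Qed.

Lemma Idem_lbdlattice : Idem_is_lbdlattice mul.
Proof.
split; first exact: nu_mul0l.
split; first exact: idem_meet_closed.
split; first exact: idem_join_closed.
split; first by move=> p q _ _; rewrite idem_meetC idem_joinC.
split; first by move=> p q r _ _ _; rewrite idem_meetA idem_joinA.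
split; first by move=> p q idp _; rewrite idem_meetKU ?idem_joinKI.
split; first by move=> p q r idp _ _; exact: idem_meetUr.
by move=> p _; exact: idem_join0x.
Qed.

End NonUnitalRing.

Section Motives.
Variables (d : Order.disp_t) (D : bDistrLatticeType d).
Local Notation ZD := (ZD D).
Local Notation pi := (\pi_(M D)).
Implicit Types (x y z : ZD) (U V W : D).

Definition meetZ x y : ZD :=
  fglift (fun U => fglift (fun V => << Order.meet U V >> : ZD) y) x.

Lemma meetZU U V : meetZ << U >> << V >> = << Order.meet U V >>.
Proof. by rewrite /meetZ !fgliftU. Qed.

Lemma meetZBl y : zmod_morphism (meetZ^~ y).
Proof. by move=> x z; rewrite /meetZ raddfB. Qed.

Lemma meetZDl y : {morph meetZ^~ y : x z / x + z}.
Proof. by move=> x z; rewrite /meetZ raddfD. Qed.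

Lemma meetZBr x : zmod_morphism (meetZ x).
Proof.
move=> y z; apply: (freeg_morph_ext (F := meetZ^~ _)
  (G := fun x => meetZ x y - meetZ x z)) => [||U]; first exact: meetZBl.
- by move=> a b; rewrite !meetZBl opprD addrACA -opprD.
- by rewrite /meetZ !fgliftU raddfB.
Qed.

HB.instance Definition _ x := GRing.isZmodMorphism.Build _ _ (meetZ x) (meetZBr x).

Lemma meetZC : commutative meetZ.
Proof.
move=> x y; apply: (freeg_morph_ext (F := meetZ^~ y) (G := meetZ y)) => [||U].
- exact: meetZBl.
- exact: raddfB.
apply: (freeg_morph_ext (F := meetZ _) (G := meetZ^~ _)) => [||V].
- exact: raddfB.
- exact: meetZBl.
by rewrite !meetZU meetC.
Qed.

Lemma meetZA : associative meetZ.
Proof.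
move=> x y z.
apply: (freeg_morph_ext (F := meetZ^~ _) (G := fun x => meetZ (meetZ x y) z)) => [||U].
- exact: meetZBl.
- by move=> a b; rewrite !meetZBl.
apply: (freeg_morph_ext (F := fun y => meetZ _ (meetZ y z))
  (G := fun y => meetZ (meetZ _ y) z)) => [||V].
- by move=> a b; rewrite meetZBl raddfB.
- by move=> a b; rewrite raddfB meetZBl.
apply: (freeg_morph_ext (F := fun z => meetZ _ (meetZ _ z))
  (G := fun z => meetZ (meetZ _ _) z)) => [||W].
- by move=> a b; rewrite !raddfB.
- exact: raddfB.
by rewrite !meetZU meetA.
Qed.

Lemma motive_relP x : reflect (motive_rel x) (x \in N_D D).
Proof. exact: motive_relbP. Qed.

Lemma motive_rel_meetZU x W : motive_rel x -> motive_rel (meetZ x << W >>).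
Proof.
elim=> [|U V||x1 x2 _ IH1 _ IH2].
- by rewrite meetZU meet0x; exact: mrel_bot.
- (* meet distributes over join, so W maps the relation of U, V to that of
     U `&` W, V `&` W *)
  have meet3 : Order.meet (Order.meet U V) W = Order.meet (Order.meet U W) (Order.meet V W).
    by rewrite meetACA meetxx.
  by rewrite !meetZBl meetZDl !meetZU meetUl meet3; exact: mrel_mv.
- by rewrite meetZC raddf0; exact: mrel_zero.
- by rewrite meetZBl; exact: mrel_sub.
Qed.

Lemma motive_rel_meetZ x y : motive_rel x -> motive_rel (meetZ x y).
Proof.
move=> Nx; elim/freeg_ind: y => [|y z Ny Nz|W]; last exact: motive_rel_meetZU.
- by rewrite raddf0; exact: mrel_zero.
- by rewrite raddfB; exact: mrel_sub.
Qed.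

Lemma pi_eqM x y : pi x = pi y <-> motive_rel (x - y).
Proof.
by rewrite (rwP (motive_relP _)) Quotient.idealrBE; split=> /eqP.
Qed.

Lemma M_ind (P : M D -> Prop) : (forall x, P (pi x)) -> forall a, P a.
Proof. by move=> Ppi a; rewrite -[a]reprK. Qed.

Lemma pi_motive_rel x : motive_rel x -> pi x = 0.
Proof. by move=> Nx; rewrite -(raddf0 pi); apply/pi_eqM; rewrite subr0. Qed.

Lemma ker_reprE (V : zmodType) (F : ZD -> V) :
    zmod_morphism F -> (forall x, motive_rel x -> F x = 0) ->
  forall x, F (repr (pi x)) = F x.
Proof.
move=> FB FN x; apply/eqP; rewrite -subr_eq0 -FB FN //.
by apply/pi_eqM; rewrite reprK.
Qed.

Definition mulM (a b : M D) : M D := pi (meetZ (repr a) (repr b)).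

Lemma mulM_pi x y : mulM (pi x) (pi y) = pi (meetZ x y).
Proof.
rewrite /mulM (ker_reprE (F := fun u => pi (meetZ u _))).
- rewrite (ker_reprE (F := fun v => pi (meetZ x v))) //.
  + by move=> v w; rewrite /= !raddfB.
  + by move=> v Nv; rewrite /= meetZC; apply: pi_motive_rel; exact: motive_rel_meetZ.
- by move=> u v; rewrite /= meetZBl raddfB.
- by move=> u Nu; apply: pi_motive_rel; exact: motive_rel_meetZ.
Qed.

Lemma mulM_nuCRing : is_nuCRing mulM.
Proof.
split=> [a b c|a b|a b c]; elim/M_ind: a => x; elim/M_ind: b => y //.
- by elim/M_ind: c => z; rewrite !mulM_pi meetZA.
- by rewrite !mulM_pi meetZC.
- by elim/M_ind: c => z; rewrite -raddfD !mulM_pi meetZDl raddfD.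
Qed.

Lemma mulM_motive U V : mulM (motive U) (motive V) = motive (Order.meet U V).
Proof. by rewrite mulM_pi meetZU. Qed.

Lemma motive_bot : motive (Order.bottom : D) = 0.
Proof. exact: pi_motive_rel (mrel_bot D). Qed.

Lemma motive_join U V :
  motive (Order.join U V) = motive U + motive V - motive (Order.meet U V).
Proof.
have /pi_motive_rel := mrel_mv U V.
by rewrite !raddfB raddfD /motive => /subr0_eq <-; rewrite opprB addrC subrK.
Qed.

Lemma motive_lb_hom : lb_hom_to_Idem mulM (@motive d D).
Proof.
split=> [U|U V|U V|]; last exact: motive_bot.
- by rewrite /idem mulM_motive meetxx.
- by rewrite /idem_meet mulM_motive.
- by rewrite motive_join /idem_join mulM_motive.
Qed.

Section UniversalProperty.
Variables (R : zmodType) (mulR : R -> R -> R).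
Hypothesis mulR_nuCRing : is_nuCRing mulR.
Variable f : D -> R.
Hypothesis f_hom : lb_hom_to_Idem mulR f.

(* [zmodule R] is R with its canonical int-module structure, which [fglift]
   requires. *)
Definition liftZ (x : ZD) : R := fglift (f : D -> zmodule R) x.

Lemma liftZU U : liftZ << U >> = f U.
Proof. exact: (fgliftU (f : D -> zmodule R)). Qed.

HB.instance Definition _ := GRing.isZmodMorphism.Build _ R liftZ
  (lift_is_additive (f : D -> zmodule R)).

Lemma liftZ_motive_rel x : motive_rel x -> liftZ x = 0.
Proof.
case: f_hom => _ f_meet f_join f_bot.
elim=> [|U V||x1 x2 _ IH1 _ IH2].
- by rewrite liftZU f_bot.
- rewrite !raddfB raddfD /= !liftZU f_join /idem_join f_meet /idem_meet.
  by rewrite subKr subrr.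
- by rewrite raddf0.
- by rewrite raddfB /= IH1 IH2 subrr.
Qed.

Lemma liftZ_meetZ x y : liftZ (meetZ x y) = mulR (liftZ x) (liftZ y).
Proof.
case: f_hom => _ f_meet _ _.
apply: (freeg_morph_ext (F := fun x => liftZ (meetZ x y))
  (G := fun x => mulR (liftZ x) (liftZ y))) => [a b|a b|U] /=.
- by rewrite meetZBl raddfB.
- by rewrite raddfB (nu_mulBl mulR_nuCRing).
apply: (freeg_morph_ext (F := fun y => liftZ (meetZ _ y))
  (G := fun y => mulR (liftZ _) (liftZ y))) => [a b|a b|V] /=.
- by rewrite !raddfB.
- by rewrite raddfB (nu_mulBr mulR_nuCRing).
by rewrite meetZU !liftZU f_meet.
Qed.

Definition liftM (a : M D) : R := liftZ (repr a).

Lemma liftM_pi x : liftM (pi x) = liftZ x.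
Proof. by apply: ker_reprE; [exact: raddfB | exact: liftZ_motive_rel]. Qed.

Lemma liftM_hom : nu_ring_hom mulM mulR liftM.
Proof.
split=> a b; elim/M_ind: a => x; elim/M_ind: b => y.
- by rewrite -raddfD !liftM_pi raddfD.
- by rewrite mulM_pi !liftM_pi liftZ_meetZ.
Qed.

Lemma liftM_motive U : liftM (motive U) = f U.
Proof. by rewrite liftM_pi liftZU. Qed.

Lemma liftM_unique (g : M D -> R) :
  nu_ring_hom mulM mulR g -> (forall U, g (motive U) = f U) -> g =1 liftM.
Proof.
move=> [gD _] g_motive; elim/M_ind => x; rewrite liftM_pi.
have gB : zmod_morphism g by move=> a b; apply: (addIr (g b)); rewrite -gD !subrK.
apply: (freeg_morph_ext (F := fun x => g (pi x))) x => [a b|a b|U] /=.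
- by rewrite raddfB gB.
- by rewrite raddfB.
- by rewrite liftZU g_motive.
Qed.

Lemma motive_universal : exists! g : M D -> R,
  nu_ring_hom mulM mulR g /\ (forall U, g (motive U) = f U).
Proof.
exists liftM; split=> [|g [g_hom g_motive]]; first exact: (conj liftM_hom liftM_motive).
by apply: functional_extensionality => a; rewrite (liftM_unique g_hom g_motive).
Qed.

End UniversalProperty.

End Motives.

Theorem theorem3p38 :
  (forall (R : zmodType) (mulR : R -> R -> R),
      is_nuCRing mulR -> Idem_is_lbdlattice mulR) /\
  (forall (d : Order.disp_t) (D : bDistrLatticeType d),
    exists mulM : M D -> M D -> M D,
      [/\ is_nuCRing mulM,
          (forall U V : D, mulM (motive U) (motive V) = motive (Order.meet U V)),
          lb_hom_to_Idem mulM (@motive d D) &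
          forall (R : zmodType) (mulR : R -> R -> R), is_nuCRing mulR ->
            forall f : D -> R, lb_hom_to_Idem mulR f ->
              exists! g : M D -> R,
                nu_ring_hom mulM mulR g /\ (forall U : D, g (motive U) = f U)]).
Proof.
split=> [R mulR|d D]; first exact: Idem_lbdlattice.
exists (@mulM d D); split.
- exact: mulM_nuCRing.
- exact: mulM_motive.
- exact: motive_lb_hom.
- exact: motive_universal.
Qed.
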